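(* Let $b\in\mathcal B$ and let $R$ be the multiset of zeros in $\mathbb C^*$ of the Laurent polynomial $1-bb^*$. Then: (a) $\pi_2^{-1}(b)\subseteq\mathcal S$ is finite and $|\pi_2^{-1}(b)|=\mathcal N(R)$; (b) if $(a,b),(a',b)\in\pi_2^{-1}(b)$, then $a\ne a'$ if and only if the multisets of zeros of $a^*$ and $(a')^*$ differ; moreover $a$ and $a'$ have the same zeros on $\mathbb T$ counted with multiplicity; (c) if $a$ is a polynomial with $a(0)\ne0$ and zero multiset $R_a$, then $(a^*,b)\in\pi_2^{-1}(b)$ implies $R=\bigcup_{\alpha\in R_a}\{\alpha,1/\overline\alpha\}$ as multisets; conversely, if $R=\bigcup_{\alpha\in R_a}\{\alpha,1/\overline\alpha\}$ then there is a unique $\lambda\in\mathbb C^*$ with $(\lambda a^*,b)\in\pi_2^{-1}(b)$.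
   Context: $\mathbb T$ is the unit circle, $\mathbb C^*=\mathbb C\setminus\{0\}$, $a^*(z):=\overline{a(1/\overline z)}$ for a Laurent polynomial $a$. $\mathcal S$ is the set of pairs $(a,b)$ of Laurent polynomials with $aa^*+bb^*=1$ and $0<a^*(0)<\infty$; $\pi_1(a,b)=a$, $\pi_2(a,b)=b$, $\mathcal A:=\pi_1(\mathcal S)$, $\mathcal B:=\pi_2(\mathcal S)$. Multiset unions add multiplicities. Counting function: for a finite multiset $R\subset\mathbb C^*$, define $\alpha\sim\beta$ iff $\alpha=\beta$ or $\alpha=1/\overline\beta$ (equivalence classes taken as multisets, all of even size in the cases considered); for a class $y$ let $\sharp(y):=1$ if $y$ meets $\mathbb T$ and $\sharp(y):=1+|y|/2$ otherwise; $\mathcal N(R):=\prod_{y\in R/\sim}\sharp(y)$. *)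

From HB Require Import structures.
From mathcomp Require Import all_boot all_order all_algebra.
From mathcomp Require Import finmap.
From mathcomp Require Import complex.
From mathcomp Require Import reals.
Set Implicit Arguments. Unset Strict Implicit. Unset Printing Implicit Defensive.
Import Order.TTheory GRing.Theory Num.Theory.
Local Open Scope ring_scope.


Section Laurent.
Variable R : realType.
Notation C := R[i].

Definition laurent := {fsfun int -> C with 0}.

Definition ladd (f g : laurent) : laurent :=
  [fsfun n in (finsupp f `|` finsupp g)%fset => f n + g n].
Definition lsub (f g : laurent) : laurent :=
  [fsfun n in (finsupp f `|` finsupp g)%fset => f n - g n].
Definition lmul (f g : laurent) : laurent :=
  [fsfun n in [fset (i + j)%R | i in finsupp f, j in finsupp g]%fset =>
     \sum_(i <- finsupp f) f i * g (n - i)].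
Definition lstar (f : laurent) : laurent :=
  [fsfun n in [fset (- i)%R | i in finsupp f]%fset => (f (- n))^*].
Definition lone : laurent := [fsfun n in [fset (0 : int)]%fset => 1].
Definition lscale (c : C) (f : laurent) : laurent :=
  [fsfun n in finsupp f => c * f n].
Definition lpoly (p : {poly C}) : laurent :=
  [fsfun n in [fset (k%:Z) | k in iota 0 (size p)]%fset => p`_(absz n)].

(** The multiset (as a sequence, repetitions = multiplicity) of roots of a
    polynomial over the algebraically closed field C; meaningful for p != 0. *)
Definition rootseq (p : {poly C}) : seq C := sval (closed_field_poly_normal p).

(** z^N f(z) as a polynomial, with N := sum of |n| over the support of f
    (so that z^N f(z) has no negative powers). *)
Definition lbound (f : laurent) : nat := \sum_(i <- finsupp f) absz i.
Definition lshiftpoly (f : laurent) : {poly C} :=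
  \poly_(k < (lbound f).*2.+1) f (k%:Z - (lbound f)%:Z).

Definition lzeros (f : laurent) : seq C :=
  [seq x <- rootseq (lshiftpoly f) | x != 0].

(** The set S and the set B. "0 < a^*(0) < oo": a^* has no negative powers
    and its constant coefficient is a positive real. *)
Definition inS (p : laurent * laurent) : Prop :=
  let: (a, b) := p in
  [/\ ladd (lmul a (lstar a)) (lmul b (lstar b)) = lone,
      (forall n : int, n < 0 -> lstar a n = 0) & 0 < lstar a 0].
Definition inB (b : laurent) : Prop := exists a, inS (a, b).

Definition reflT (x : C) : C := (x^*)^-1.
Definition eqcls (Rs : seq C) (x : C) : seq C :=
  [seq y <- Rs | (y == x) || (y == reflT x)].
Definition sharp (y : seq C) : nat :=
  if has (fun x => `|x| == 1) y then 1%N else (1 + (size y)./2)%N.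
Definition Ncount (Rs : seq C) : nat :=
  \prod_(y <- undup [seq eqcls Rs x | x <- Rs]) sharp y.

Definition symm_union (Rs : seq C) : seq C :=
  flatten [seq [:: x; reflT x] | x <- Rs].
End Laurent.

(* A solution [(a, b)] has [a^* = lpoly p] with [p(0) > 0], and [a a^* = 1 - b b^*] says that
   [|p|^2 = 1 - |b|^2] on the unit circle.  Hence the zeros [R] of [1 - b b^*] in C^* are the
   roots of [p] together with their reflections [1/conj r]: the roots of [p] form a "half" of [R].
   Conversely, for any half [S] of [R] the polynomial [q] with roots [S] satisfies
   [(prefl q * q)(z) = z^n |q(z)|^2] on the unit circle, and the left side has the same roots as
   for a known solution; so [|q|^2] is a positive multiple of [1 - b b^*], and exactly one
   rescaling of [q] is a solution.  Solutions therefore correspond to halves of [R] up to order.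
   These are counted class by class: a class on the circle ([2m] copies of [x]) has only the
   half [x^m]; an off-circle class [{x^m, (1/conj x)^m}] has the [m + 1] halves
   [x^k (1/conj x)^(m-k)]. *)

From HB Require Import structures.
From mathcomp Require Import all_boot all_order all_algebra.
From mathcomp Require Import finmap complex reals.
From mathcomp Require Import zify ring.
Import Order.TTheory GRing.Theory Num.Theory.
Local Open Scope ring_scope.
Set Implicit Arguments. Unset Strict Implicit. Unset Printing Implicit Defensive.

Section LaurentPolynomials.
Variable R : realType.
Local Notation C := R[i].
Local Notation laurent := (laurent R).
Local Notation refl := (@reflT R).
Implicit Types (f g : laurent) (z : C) (p q : {poly C}) (Rs S : seq C).

Lemma laddE f g n : ladd f g n = f n + g n.
Proof.
rewrite /ladd fsfun_fun in_fsetU; case: ifP => // /negbT.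
by rewrite negb_or => /andP[fn gn]; rewrite !fsfun_dflt // addr0.
Qed.

Lemma lsubE f g n : lsub f g n = f n - g n.
Proof.
rewrite /lsub fsfun_fun in_fsetU; case: ifP => // /negbT.
by rewrite negb_or => /andP[fn gn]; rewrite !fsfun_dflt // subr0.
Qed.

Lemma lmulE f g n : lmul f g n = \sum_(i <- finsupp f) f i * g (n - i).
Proof.
rewrite /lmul fsfun_fun; case: ifP => // /negP nsupp.
rewrite big_seq big1 // => i fi; case: (finsuppP g (n - i)) => [_|gi].
  by rewrite mulr0.
by case: nsupp; apply/imfset2P; exists i => //; exists (n - i); rewrite ?subrKC.
Qed.

Lemma lstarE f n : lstar f n = (f (- n))^*.
Proof.
rewrite /lstar fsfun_fun; case: ifP => // /negP nsupp.
case: (finsuppP f (- n)) => [_|fn]; first by rewrite conjC0.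
by case: nsupp; apply/imfsetP; exists (- n); rewrite ?opprK.
Qed.

Lemma lscaleE c f n : lscale c f n = c * f n.
Proof.
by rewrite /lscale fsfun_fun; case: ifP => // /negbT fn; rewrite fsfun_dflt ?mulr0.
Qed.

Lemma lpolyE p n : lpoly p n = if 0 <= n then p`_(absz n) else 0.
Proof.
rewrite /lpoly fsfun_fun; case: ifP => [/imfsetP[k /=]|/negbT nsupp].
  by rewrite mem_iota /= => _ ->.
case: n nsupp => [k|k] //= nsupp; apply/esym/eqP; apply: contraR nsupp => pk.
apply/imfsetP; exists k => //=; rewrite mem_iota add0n.
by apply: contraR pk; rewrite -leqNgt => /(nth_default 0) ->.
Qed.

Lemma lstarK : involutive (@lstar R).
Proof. by move=> f; apply/fsfunP => n; rewrite !lstarE opprK conjCK. Qed.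

Lemma lscale_lstar_lpoly c p : lscale c (lstar (lpoly p)) = lstar (lpoly (c^* *: p)).
Proof.
apply/fsfunP => n; rewrite lscaleE !lstarE !lpolyE.
by case: ifP; rewrite ?coefZ ?rmorphM /= ?conjCK ?conjC0 ?mulr0.
Qed.

Definition leval f z := \sum_(i <- finsupp f) f i * z ^ i.

Lemma levalE f z (s : seq int) : uniq s -> {subset finsupp f <= s} ->
  leval f z = \sum_(i <- s) f i * z ^ i.
Proof.
move=> s_uniq fs; rewrite (bigID (mem (finsupp f))) /= [X in _ + X]big1 ?addr0.
  rewrite -big_filter; apply: perm_big; apply: uniq_perm.
  - exact: fset_uniq.
  - exact: filter_uniq.
  by move=> i; rewrite mem_filter /=; case fi: (i \in finsupp f) => //=; rewrite fs.
by move=> i /negbTE fi; rewrite fsfun_dflt ?fi // mul0r.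
Qed.

Lemma leval_sub f g z : leval (lsub f g) z = leval f z - leval g z.
Proof.
pose s := (finsupp (lsub f g) `|` finsupp f `|` finsupp g)%fset.
have [sub_fg sub_f sub_g] : [/\ {subset finsupp (lsub f g) <= s},
    {subset finsupp f <= s} & {subset finsupp g <= s}].
  by split=> i; rewrite !in_fsetU => ->; rewrite ?orbT.
rewrite !(levalE z (fset_uniq s)) // -sumrB.
by apply: eq_bigr => i _; rewrite lsubE mulrBl.
Qed.

Lemma leval_scale c f z : leval (lscale c f) z = c * leval f z.
Proof.
pose s := (finsupp (lscale c f) `|` finsupp f)%fset.
have [sub_cf sub_f] : {subset finsupp (lscale c f) <= s} /\ {subset finsupp f <= s}.
  by split=> i; rewrite !in_fsetU => ->; rewrite ?orbT.
rewrite !(levalE z (fset_uniq s)) // mulr_sumr.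
by apply: eq_bigr => i _; rewrite lscaleE mulrA.
Qed.

Lemma leval_lpoly p z : leval (lpoly p) z = p.[z].
Proof.
rewrite (levalE (s := [seq k%:Z | k <- iota 0 (size p)]) _ _).
- rewrite big_map horner_coef -(big_mkord xpredT (fun i => p`_i * z ^+ i)).
  by rewrite /index_iota subn0; apply: eq_bigr => i _; rewrite lpolyE.
- by rewrite map_inj_uniq ?iota_uniq // => x y [].
move=> [k|k]; rewrite mem_finsupp lpolyE ?eqxx //= => pk.
apply: map_f; rewrite mem_iota /= add0n ltnNge.
by apply: contra pk => /(nth_default 0) ->.
Qed.

Lemma leval_mul f g z : z != 0 -> leval (lmul f g) z = leval f z * leval g z.
Proof.
move=> z0; have zu : z \is a GRing.unit by rewrite unitfE.
pose s := (finsupp (lmul f g) `|` [fset (i + j)%R | i in finsupp f, j in finsupp g])%fset.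
rewrite (levalE z (fset_uniq s)); last by move=> i fi; rewrite in_fsetU fi.
under eq_bigr => n _ do rewrite lmulE mulr_suml.
rewrite exchange_big /= /leval mulr_suml; apply: eq_big_seq => i fi.
under eq_bigr => n _ do rewrite -mulrA.
rewrite -mulr_sumr -mulrA; congr (_ * _).
have shift n : g (n - i) * z ^ n = z ^ i * (g (n - i) * z ^ (n - i)).
  by rewrite mulrCA -exprzDr // subrKC.
under eq_bigr => n _ do rewrite shift.
rewrite -mulr_sumr; congr (_ * _).
rewrite -(big_map (fun n => n - i) xpredT (fun m => g m * z ^ m)).
rewrite -(levalE z) //; first by rewrite map_inj_uniq ?fset_uniq //; apply: addIr.
move=> j gj; apply/mapP; exists (i + j); last by rewrite addrC addKr.
by rewrite in_fsetU; apply/orP; right; apply/imfset2P; exists i => //; exists j.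
Qed.

Lemma conjC_exprz (w : C) (n : int) : (w ^ n)^* = w^* ^ n.
Proof. by case: n => k; rewrite ?NegzE -?exprnN ?fmorphV rmorphXn. Qed.

Lemma leval_lstar f z : z != 0 -> leval (lstar f) z = (leval f (refl z))^*.
Proof.
move=> z0; have zu : z \is a GRing.unit by rewrite unitfE.
rewrite (levalE (s := [seq - i | i <- finsupp f]) _ _).
- rewrite big_map rmorph_sum; apply: eq_bigr => i _.
  by rewrite lstarE opprK rmorphM /= conjC_exprz /reflT fmorphV /= conjCK exprz_inv.
- by rewrite (map_inj_uniq oppr_inj) fset_uniq.
move=> n; rewrite mem_finsupp lstarE => fn; apply/mapP; exists (- n); rewrite ?opprK //.
by rewrite mem_finsupp; apply: contra fn => /eqP ->; rewrite conjC0.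
Qed.

Lemma poly_eq_on_nonzero p q : (forall z, z != 0 -> p.[z] = q.[z]) -> p = q.
Proof.
move=> pq; apply/eqP; rewrite -subr_eq0; apply/negPn/negP => d0.
pose s : seq C := [seq k.+1%:R | k <- iota 0 (size (p - q))].
have s_roots : all (root (p - q)) s.
  by apply/allP => _ /mapP[k _ ->]; rewrite /root !hornerE pq ?subrr ?pnatr_eq0.
have s_uniq : uniq s by rewrite map_inj_uniq ?iota_uniq // => x y /eqP; rewrite eqr_nat => /eqP[].
by have := max_poly_roots d0 s_roots s_uniq; rewrite size_map size_iota ltnn.
Qed.

Lemma lbound_finsupp f i : i \in finsupp f -> (absz i <= lbound f)%N.
Proof. by move=> fi; rewrite /lbound (big_rem i fi) leq_addr. Qed.

Lemma horner_lshiftpoly f z : z != 0 -> (lshiftpoly f).[z] = z ^+ lbound f * leval f z.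
Proof.
move=> z0; have zu : z \is a GRing.unit by rewrite unitfE.
rewrite /lshiftpoly horner_poly; set N := lbound f.
have shift_inj : injective (fun k : nat => k%:Z - N%:Z) by move=> x y /addIr[].
rewrite (levalE (s := [seq k%:Z - N%:Z | k <- iota 0 N.*2.+1]) _ _).
- rewrite big_map mulr_sumr -(big_mkord xpredT (fun k => f (k%:Z - N%:Z) * z ^+ k)).
  rewrite /index_iota subn0; apply: eq_bigr => k _; rewrite mulrCA; congr (_ * _).
  by rewrite -[z ^+ N]/(z ^ N%:Z) -[z ^+ k]/(z ^ k%:Z) -exprzDr // subrKC.
- by rewrite (map_inj_uniq shift_inj) iota_uniq.
move=> i /lbound_finsupp iN; apply/mapP; exists (absz (i + N%:Z)).
  by rewrite mem_iota add0n /=; lia.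
by rewrite gez0_abs ?addrK //; lia.
Qed.

Lemma leval_inj f g : (forall z, z != 0 -> leval f z = leval g z) -> f = g.
Proof.
move=> fg; apply/fsfunP => n; apply/eqP; rewrite -subr_eq0 -lsubE; apply/eqP.
set h := lsub f g; have [//|hn] := finsuppP h n.
have h0 : lshiftpoly h = 0.
  apply: poly_eq_on_nonzero => z z0.
  by rewrite horner_lshiftpoly // leval_sub fg // subrr mulr0 horner0.
have := lbound_finsupp hn; set N := lbound h => nN.
have : (lshiftpoly h)`_(absz (n + N%:Z)) = h n.
  by rewrite coef_poly ifT; [rewrite gez0_abs ?addrK //; lia | lia].
by rewrite h0 coef0.
Qed.

Lemma lpoly_inj : injective (@lpoly R).
Proof.
move=> p q pq; apply: poly_eq_on_nonzero => z _.
by rewrite -!leval_lpoly pq.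
Qed.

Lemma rootseqE p : p = lead_coef p *: \prod_(z <- rootseq p) ('X - z%:P).
Proof. by rewrite /rootseq; case: closed_field_poly_normal. Qed.

Lemma horner_rootseq p z : p.[z] = lead_coef p * \prod_(r <- rootseq p) (z - r).
Proof.
rewrite {1}(rootseqE p) hornerZ horner_prod.
by under eq_bigr do rewrite hornerXsubC.
Qed.

Lemma count_mem_rootseq p z : p != 0 -> count_mem z (rootseq p) = mup z p.
Proof.
move=> p0; rewrite [in RHS](rootseqE p) -mul_polyC mupMr ?rootC ?lead_coef_eq0 //.
by rewrite mu_prod_XsubC.
Qed.

Lemma rootseq_scale_prod (c : C) (s : seq C) :
  c != 0 -> perm_eq (rootseq (c *: \prod_(z <- s) ('X - z%:P))) s.
Proof.
move=> c0; have p0 : c *: \prod_(z <- s) ('X - z%:P) != 0.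
  by rewrite scaler_eq0 negb_or c0 monic_neq0 // monic_prod_XsubC.
apply/allP => z _ /=; rewrite count_mem_rootseq // -mul_polyC mupMr ?rootC //.
by rewrite mu_prod_XsubC.
Qed.

Lemma rootseqM p q : p != 0 -> q != 0 ->
  perm_eq (rootseq (p * q)) (rootseq p ++ rootseq q).
Proof.
move=> p0 q0; apply/allP => z _ /=.
by rewrite count_cat !count_mem_rootseq ?mulf_neq0 // mupM.
Qed.

Lemma rootseqZ (c : C) p : c != 0 -> perm_eq (rootseq (c *: p)) (rootseq p).
Proof.
have [->|p0 c0] := eqVneq p 0; first by rewrite scaler0.
apply/allP => z _ /=; rewrite !count_mem_rootseq ?scaler_eq0 ?negb_or ?c0 //.
by rewrite -mul_polyC mupMr ?rootC.
Qed.

Lemma perm_rootseq_scale p q : q != 0 -> perm_eq (rootseq p) (rootseq q) ->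
  p = (lead_coef p / lead_coef q) *: q.
Proof.
move=> q0 pq; set k := _ / _.
rewrite {1}(rootseqE p) (perm_big _ pq) {2}(rootseqE q) scalerA.
by rewrite /k divfK ?lead_coef_eq0.
Qed.

Lemma rootseq_neq0 p r : p`_0 != 0 -> r \in rootseq p -> r != 0.
Proof.
move=> p0 pr; move: p0; rewrite -horner_coef0 horner_rootseq mulf_eq0 negb_or.
by case/andP=> _; rewrite prodf_seq_neq0 => /allP/(_ r pr); rewrite sub0r oppr_eq0.
Qed.

Lemma coef0_neq0_poly p : p`_0 != 0 -> p != 0.
Proof. by apply: contraNneq => ->; rewrite coef0. Qed.

Lemma count_mem_filter_neq0 (s : seq C) z :
  count_mem z [seq y <- s | y != 0] = if z == 0 then 0%N else count_mem z s.
Proof.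
have [->|z0] := eqVneq z 0; first by apply/count_memPn; rewrite mem_filter eqxx.
by rewrite count_filter; apply: eq_count => y /=; have [->|] := eqVneq y z; rewrite ?z0.
Qed.

Lemma lzeros_neq0 f : 0 \notin lzeros f.
Proof. by rewrite mem_filter eqxx. Qed.

Lemma lzeros_perm f p (k : nat) : p`_0 != 0 ->
  (forall z, z != 0 -> p.[z] = z ^+ k * leval f z) -> perm_eq (lzeros f) (rootseq p).
Proof.
move=> p00 pf; have p0 := coef0_neq0_poly p00.
set N := lbound f; set Q := lshiftpoly f.
have XQ : 'X^N * p = 'X^k * Q.
  apply: poly_eq_on_nonzero => z z0.
  by rewrite !hornerM !hornerXn pf // horner_lshiftpoly // mulrCA.
have Q0 : Q != 0.
  have : 'X^k * Q != 0 by rewrite -XQ mulf_neq0 // monic_neq0 // monicXn.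
  by apply: contraNneq => ->; rewrite mulr0.
apply/allP => z _ /=; rewrite /lzeros -/Q count_mem_filter_neq0.
have [->|z0] := eqVneq z 0.
  by apply/eqP/esym/count_memPn/negP => /(rootseq_neq0 p00); rewrite eqxx.
have notroot n : ~~ root 'X^n z by rewrite /root hornerXn expf_neq0.
by rewrite !count_mem_rootseq // -(mupMr _ (notroot k)) -XQ mupMr.
Qed.

Lemma reflTK : involutive refl.
Proof. by move=> x; rewrite /reflT fmorphV /= conjCK invrK. Qed.

Lemma reflT_eq0 z : (refl z == 0) = (z == 0).
Proof. by rewrite /reflT invr_eq0 conjC_eq0. Qed.

Lemma reflT_norm1 z : `|z| = 1 -> refl z = z.
Proof.
move=> z1; have z0 : z != 0 by rewrite -normr_eq0 z1 oner_eq0.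
have zz : z * z^* = 1 by rewrite -normCK z1 expr1n.
by rewrite /reflT -[z^*](mulKf z0) zz mulr1 invrK.
Qed.

Lemma reflT_fix_norm1 z : z != 0 -> refl z = z -> `|z| = 1.
Proof.
move=> z0 zz; have zc : z^* = z^-1 by rewrite -{2}zz /reflT invrK.
by apply/eqP; rewrite -sqrp_eq1 // normCK zc divff.
Qed.

(* The factor [p_0^*] makes [prefl p] agree with [z^n conj(p(1/conj z))] on C^*. *)
Definition prefl p : {poly C} := (p`_0)^* *: \prod_(r <- rootseq p) ('X - (refl r)%:P).

Lemma horner_prefl p z : p`_0 != 0 -> z != 0 ->
  (prefl p).[z] = z ^+ size (rootseq p) * (p.[refl z])^*.
Proof.
move=> p0 z0; rewrite /prefl hornerZ horner_prod -horner_coef0 !horner_rootseq.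
rewrite !rmorphM !rmorph_prod /= -!mulrA [RHS]mulrCA; congr (_ * _).
have zn : z ^+ size (rootseq p) = \prod_(r <- rootseq p) z.
  by rewrite big_const_seq count_predT iter_mulr_1.
rewrite zn -!big_split /=.
apply: eq_big_seq => r pr; have r0 := rootseq_neq0 p0 pr.
have cr0 : r^* != 0 by rewrite conjC_eq0.
rewrite hornerXsubC /reflT !rmorphB /= fmorphV /= conjCK conjC0.
by field; rewrite z0 cr0.
Qed.

Lemma coef0_prefl p : p`_0 != 0 -> (prefl p)`_0 != 0.
Proof.
move=> p0; rewrite -horner_coef0 /prefl hornerZ mulf_neq0 ?conjC_eq0 //.
rewrite horner_prod prodf_seq_neq0; apply/allP => r pr /=.
by rewrite hornerXsubC sub0r oppr_eq0 reflT_eq0 (rootseq_neq0 p0).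
Qed.

Lemma rootseq_prefl p : p`_0 != 0 -> perm_eq (rootseq (prefl p)) (map refl (rootseq p)).
Proof.
move=> p0; rewrite /prefl -(big_map refl xpredT (fun r => 'X - r%:P)).
by rewrite rootseq_scale_prod ?conjC_eq0.
Qed.

Lemma lzeros_lpoly p : p`_0 != 0 -> perm_eq (lzeros (lpoly p)) (rootseq p).
Proof.
move=> p0; apply: (lzeros_perm (k := 0) p0) => z z0.
by rewrite mul1r leval_lpoly.
Qed.

Lemma lzeros_lstar_lpoly p : p`_0 != 0 ->
  perm_eq (lzeros (lstar (lpoly p))) (map refl (rootseq p)).
Proof.
move=> p0; apply: perm_trans (rootseq_prefl p0).
apply: (lzeros_perm (k := size (rootseq p)) (coef0_prefl p0)) => z z0.
by rewrite horner_prefl // leval_lstar // leval_lpoly.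
Qed.

(* For [a := lstar (lpoly p)], [lnormsq p] is [a a^*], i.e. [|p|^2] on the unit circle. *)
Definition lnormsq p : laurent := lmul (lstar (lpoly p)) (lpoly p).

Lemma leval_lnormsq p z : z != 0 -> leval (lnormsq p) z = (p.[refl z])^* * p.[z].
Proof. by move=> z0; rewrite leval_mul // leval_lstar // !leval_lpoly. Qed.

Lemma horner_prefl_mul p z : p`_0 != 0 -> z != 0 ->
  (prefl p * p).[z] = z ^+ size (rootseq p) * leval (lnormsq p) z.
Proof. by move=> p0 z0; rewrite hornerM horner_prefl // leval_lnormsq // mulrA. Qed.

Lemma rootseq_prefl_mul p : p`_0 != 0 ->
  perm_eq (rootseq (prefl p * p)) (rootseq p ++ map refl (rootseq p)).
Proof.
move=> p0; have pp0 := coef0_neq0_poly (coef0_prefl p0).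
apply: perm_trans (rootseqM pp0 (coef0_neq0_poly p0)) _.
by rewrite perm_catC perm_cat2l rootseq_prefl.
Qed.

Lemma lzeros_lnormsq p : p`_0 != 0 ->
  perm_eq (lzeros (lnormsq p)) (rootseq p ++ map refl (rootseq p)).
Proof.
move=> p0; apply: perm_trans (rootseq_prefl_mul p0).
have pp0 : (prefl p * p)`_0 != 0 by rewrite coef0M mulf_neq0 ?coef0_prefl.
by apply: lzeros_perm pp0 _ => z; apply: horner_prefl_mul.
Qed.

Definition half_of (Rs S : seq C) := perm_eq (S ++ map refl S) Rs.

Definition reflcls (x : C) : pred C := fun y => (y == x) || (y == refl x).

Lemma reflT_eqC x y : (refl y == x) = (y == refl x).
Proof. by rewrite -{1}(reflTK x) (can_eq reflTK). Qed.

Lemma count_map_reflT S z : count_mem z (map refl S) = count_mem (refl z) S.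
Proof. by rewrite count_map; apply: eq_count => y /=; rewrite reflT_eqC. Qed.

Lemma half_ofP Rs S :
  reflect (forall z, count_mem z Rs = count_mem z S + count_mem (refl z) S)%N (half_of Rs S).
Proof.
apply: (iffP idP) => [/permP h z|h].
  by rewrite -h count_cat count_map_reflT.
by apply/allP => z _; rewrite /= count_cat count_map_reflT h.
Qed.

Lemma mem_half_of Rs S y : half_of Rs S -> y \in S -> y \in Rs.
Proof. by move=> hS yS; rewrite -(perm_mem hS) mem_cat yS. Qed.

Lemma half_of_count_norm1 Rs S z : half_of Rs S -> `|z| = 1 ->
  count_mem z Rs = (count_mem z S).*2.
Proof. by move=> /half_ofP -> /reflT_norm1 ->; rewrite addnn. Qed.

Lemma half_of_permr Rs Rs' S : perm_eq Rs Rs' -> half_of Rs S -> half_of Rs' S.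
Proof. by move=> RR hS; apply: perm_trans hS RR. Qed.

Lemma reflcls_reflT x y : reflcls x (refl y) = reflcls x y.
Proof. by rewrite /reflcls reflT_eqC (can_eq reflTK) orbC. Qed.

Lemma reflcls_sym x y : reflcls x y -> reflcls y =1 reflcls x.
Proof. by case/orP => /eqP -> z; rewrite /reflcls // reflTK orbC. Qed.

Lemma half_of_filter (P : pred C) Rs S : (forall y, P (refl y) = P y) ->
  half_of Rs S -> half_of (filter P Rs) (filter P S).
Proof.
move=> Prefl hS; have := perm_filter P hS; rewrite filter_cat filter_map.
by rewrite (@eq_filter _ (preim refl P) P).
Qed.

Lemma half_of_cat Rs1 Rs2 S1 S2 :
  half_of Rs1 S1 -> half_of Rs2 S2 -> half_of (Rs1 ++ Rs2) (S1 ++ S2).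
Proof.
move=> /half_ofP h1 /half_ofP h2; apply/half_ofP => z.
by rewrite !count_cat h1 h2 addnACA.
Qed.

Lemma symm_union_perm (s : seq C) : perm_eq (symm_union s) (s ++ map refl s).
Proof.
apply/permP => P; elim: s => //= x s IH.
by rewrite /symm_union /= in IH *; rewrite !count_cat /= in IH *; rewrite IH; lia.
Qed.

Lemma half_of_class x S : all (reflcls x) S ->
  half_of (nseq (size S) x ++ nseq (size S) (refl x)) S.
Proof.
have move_in (a b : C) s t : perm_eq (a :: s ++ b :: t) (a :: b :: (s ++ t)).
  by apply/permP => P /=; rewrite !count_cat /=; lia.
have swap (a b : C) s : perm_eq (a :: b :: s) (b :: a :: s).
  by apply/permP => P /=; lia.
elim: S => //= y S IH /andP[xy /IH hS]; rewrite /half_of /=.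
apply: perm_trans (move_in _ _ _ _) _; rewrite perm_sym.
apply: perm_trans (move_in _ _ _ _) _; rewrite perm_sym.
case/orP: xy => /eqP ->; rewrite ?reflTK; first by rewrite !perm_cons.
by apply: perm_trans (swap _ _ _) _; rewrite !perm_cons.
Qed.

Definition half_enum Rs (sols : seq (seq C)) :=
  [/\ uniq sols, {in sols &, forall s t, perm_eq s t -> s = t},
      {in sols, forall s, half_of Rs s}
    & forall S, half_of Rs S -> exists2 s, s \in sols & perm_eq S s].

Lemma half_enum_permr Rs Rs' sols : perm_eq Rs Rs' -> half_enum Rs sols -> half_enum Rs' sols.
Proof.
move=> RR [uniq_sols canon_sols sols_half sols_all]; split=> // [s /sols_half|S hS].
  exact: half_of_permr.
by apply: sols_all; apply: half_of_permr hS; rewrite perm_sym.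
Qed.

Lemma sharp_perm (s t : seq C) : perm_eq s t -> sharp s = sharp t.
Proof. by move=> st; rewrite /sharp (perm_has _ st) (perm_size st). Qed.

Lemma half_of_nseq_size x m S :
  half_of (nseq m x ++ nseq m (refl x)) S -> size S = m.
Proof.
move/perm_size; rewrite !size_cat size_map !size_nseq !addnn.
exact: double_inj.
Qed.

Lemma half_of_nseq_mem x m S :
  half_of (nseq m x ++ nseq m (refl x)) S -> all (reflcls x) S.
Proof.
move=> hS; apply/allP => y /(mem_half_of hS).
by rewrite mem_cat => /orP[] /nseqP[-> _]; rewrite /reflcls eqxx ?orbT.
Qed.

Lemma half_enum_circle x m :
  refl x = x -> half_enum (nseq m x ++ nseq m (refl x)) [:: nseq m x].
Proof.
move=> xx; split=> //.
- by move=> s t; rewrite !inE => /eqP -> /eqP ->.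
- move=> s; rewrite inE => /eqP ->; rewrite -{1 2}(size_nseq m x).
  by apply: half_of_class; rewrite all_nseq /reflcls eqxx orbT.
move=> S hS; exists (nseq m x); rewrite ?inE //.
have /all_pred1P -> : all (pred1 x) S.
  by apply: sub_all (half_of_nseq_mem hS) => y; rewrite /reflcls xx orbb.
by rewrite (half_of_nseq_size hS).
Qed.

Lemma half_enum_pair x m : refl x != x ->
  half_enum (nseq m x ++ nseq m (refl x))
            [seq nseq k x ++ nseq (m - k) (refl x) | k <- iota 0 m.+1].
Proof.
move=> xx; pose f k := nseq k x ++ nseq (m - k) (refl x).
have xrx : (x == refl x) = false by apply/negbTE; rewrite eq_sym.
have count_f k : count_mem x (f k) = k by rewrite count_cat !count_nseq /= eqxx eq_sym xrx; lia.
have f_class k : all (reflcls x) (f k) by rewrite all_cat !all_nseq /reflcls !eqxx !orbT.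
split.
- by rewrite map_inj_uniq ?iota_uniq // => k l /(congr1 (count_mem x)); rewrite !count_f.
- by move=> s t /mapP[k _ ->] /mapP[l _ ->] /permP/(_ (pred1 x)); rewrite !count_f => ->.
- move=> s /mapP[k]; rewrite mem_iota add0n ltnS => km ->.
  by have := half_of_class (f_class k); rewrite size_cat !size_nseq subnKC.
move=> S hS; have Sx := half_of_nseq_mem hS.
have sizeS : (count_mem x S + count_mem (refl x) S)%N = m.
  rewrite -(half_of_nseq_size hS) -count_predUI.
  rewrite (@eq_count _ (predI _ _) pred0) ?count_pred0 ?addn0; last first.
    by move=> y /=; case: eqP => // ->; rewrite xrx.
  by rewrite -(count_predT S); apply/eq_in_count => y /(allP Sx).
exists (f (count_mem x S)).
  by apply: map_f; rewrite mem_iota add0n ltnS -sizeS leq_addr.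
apply/allP => z _; rewrite /f /= count_cat !count_nseq /=.
have [->|zx] := eqVneq z x; first by rewrite (negPf xx); lia.
have [->|zrx] := eqVneq z (refl x); first by rewrite mul0n mul1n -sizeS addKn.
apply/eqP/count_memPn; apply: contra zx => /(allP Sx).
by rewrite /reflcls (negPf zrx) orbF.
Qed.

Lemma half_enum_class x m : x != 0 -> exists2 sols,
  half_enum (nseq m x ++ nseq m (refl x)) sols & size sols = sharp (nseq m x ++ nseq m (refl x)).
Proof.
move=> x0; have [xx|xx] := eqVneq (refl x) x.
  exists [:: nseq m x]; first exact: half_enum_circle.
  rewrite /sharp; case: m => //= m; rewrite reflT_fix_norm1 ?eqxx //.
exists [seq nseq k x ++ nseq (m - k) (refl x) | k <- iota 0 m.+1]; first exact: half_enum_pair.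
have off_circle y : y \in nseq m x ++ nseq m (refl x) -> `|y| != 1.
  rewrite mem_cat => /orP[] /nseqP[-> _]; apply/eqP => /reflT_norm1; rewrite ?reflTK => yy.
    by rewrite yy eqxx in xx.
  by rewrite -yy eqxx in xx.
rewrite /sharp (negbTE (introN hasP _)); last by case=> y /off_circle /negP.
by rewrite size_map size_iota size_cat !size_nseq addnn doubleK add1n.
Qed.

Lemma half_enum_cat (P : pred C) Rs sols1 sols2 : (forall y, P (refl y) = P y) ->
  half_enum (filter P Rs) sols1 -> half_enum (filter (predC P) Rs) sols2 ->
  half_enum Rs [seq s1 ++ s2 | s1 <- sols1, s2 <- sols2].
Proof.
move=> Prefl [u1 c1 h1 e1] [u2 c2 h2 e2].
have PCrefl y : predC P (refl y) = predC P y by rewrite /= Prefl.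
have P1 s : s \in sols1 -> all P s.
  by move=> /h1 hs; apply/allP => y /(mem_half_of hs); rewrite mem_filter => /andP[].
have P2 s : s \in sols2 -> all (predC P) s.
  by move=> /h2 hs; apply/allP => y /(mem_half_of hs); rewrite mem_filter => /andP[].
have filter_cat_split s1 s2 : s1 \in sols1 -> s2 \in sols2 ->
    filter P (s1 ++ s2) = s1 /\ filter (predC P) (s1 ++ s2) = s2.
  move=> /P1 s1P /P2 s2P; rewrite !filter_cat (all_filterP s1P) (all_filterP s2P).
  rewrite (@eq_in_filter _ _ pred0 s2) => [|y /(allP s2P) /negbTE //].
  by rewrite (@eq_in_filter _ _ pred0 s1) => [|y /(allP s1P) /= ->]; rewrite ?filter_pred0 ?cats0.
split.
- apply: allpairs_uniq => // -[s1 s2] [t1 t2] /allpairsP[[a1 a2] [/= a1s a2s [-> ->]]].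
  move=> /allpairsP[[b1 b2] [/= b1s b2s [-> ->]]] /= ab.
  have [fa1 fa2] := filter_cat_split _ _ a1s a2s.
  have [fb1 fb2] := filter_cat_split _ _ b1s b2s.
  by congr pair; [rewrite -fa1 -fb1 ab | rewrite -fa2 -fb2 ab].
- move=> _ _ /allpairsP[[a1 a2] [/= a1s a2s ->]] /allpairsP[[b1 b2] [/= b1s b2s ->]] ab.
  have [fa1 fa2] := filter_cat_split _ _ a1s a2s.
  have [fb1 fb2] := filter_cat_split _ _ b1s b2s.
  have /c1 -> // : perm_eq a1 b1 by rewrite -fa1 -fb1 perm_filter.
  by have /c2 -> // : perm_eq a2 b2 by rewrite -fa2 -fb2 perm_filter.
- move=> _ /allpairsP[[a1 a2] [/= a1s a2s ->]].
  apply: half_of_permr (permEl (perm_filterC P Rs)) _.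
  by apply: half_of_cat; [apply: h1 | apply: h2].
move=> S hS.
have [s1 s1s S1] := e1 _ (half_of_filter Prefl hS).
have [s2 s2s S2] := e2 _ (half_of_filter PCrefl hS).
by exists (s1 ++ s2); [apply: allpairs_f | rewrite -(perm_filterC P S) perm_cat].
Qed.

Lemma Ncount_split Rs x : x \in Rs ->
  Ncount Rs = (sharp (filter (reflcls x) Rs) * Ncount (filter (predC (reflcls x)) Rs))%N.
Proof.
move=> xRs; set Rs' := filter (predC _) Rs.
have eqcls_Rs' y : y \in Rs' -> eqcls Rs' y = eqcls Rs y.
  rewrite mem_filter => /andP[/= xy _]; rewrite /eqcls -filter_predI.
  apply: eq_filter => z /=; apply/andP/idP => [[]//|yz]; split=> //.
  by case/orP: yz => /eqP ->; rewrite ?reflcls_reflT.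
have classes : perm_eq (undup [seq eqcls Rs y | y <- Rs])
                       (eqcls Rs x :: undup [seq eqcls Rs' y | y <- Rs']).
  apply: uniq_perm; rewrite ?undup_uniq //=.
    rewrite undup_uniq andbT mem_undup; apply/mapP => -[y yRs' xy].
    have : x \in eqcls Rs x by rewrite mem_filter eqxx xRs.
    by rewrite xy !mem_filter /= /reflcls eqxx andbF.
  move=> c; rewrite inE !mem_undup; apply/mapP/orP => [[y yRs ->]|].
    have [xy|xy] := boolP (reflcls x y); first by left; rewrite /eqcls (eq_filter (reflcls_sym xy)).
    by right; rewrite -eqcls_Rs' ?map_f // mem_filter /= xy.
  case=> [/eqP ->|/mapP[y yRs' ->]]; first by exists x.
  by exists y; [move: yRs'; rewrite mem_filter => /andP[] | rewrite eqcls_Rs'].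
by rewrite /Ncount (perm_big _ classes) big_cons.
Qed.

Lemma exists_half_enum Rs S : 0 \notin Rs -> half_of Rs S ->
  exists2 sols, half_enum Rs sols & size sols = Ncount Rs.
Proof.
move: {2}(size Rs) (leqnn (size Rs)) => n; elim: n Rs S => [|n IH] Rs S.
  rewrite leqn0 => /nilP -> _ _; exists [:: [::]]; last by rewrite /Ncount big_nil.
  split=> // [s t|s|S'].
  - by rewrite !inE => /eqP -> /eqP ->.
  - by rewrite inE => /eqP ->.
  by move/perm_size/eqP; rewrite size_cat size_map addn_eq0 andbb => /nilP ->; exists [::].
case: Rs => [|x Rs'] in IH *; first by move=> _; apply: IH.
set Rs := x :: Rs' => sizeRs Rs0 hS.
have x0 : x != 0 by apply: contraNneq Rs0 => <-; rewrite mem_head.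
set P := reflcls x; have Prefl : forall y, P (refl y) = P y := reflcls_reflT x.
have PCrefl : forall y, predC P (refl y) = predC P y by move=> y /=; rewrite Prefl.
have hS1 := half_of_filter Prefl hS; have hS2 := half_of_filter PCrefl hS.
set m := size (filter P S).
have class1 : perm_eq (filter P Rs) (nseq m x ++ nseq m (refl x)).
  by apply: perm_trans (half_of_class (filter_all P S)); rewrite perm_sym.
have [sols1 e1 size1] := half_enum_class m x0.
have size2 : (size (filter (predC P) Rs) <= n)%N.
  have := count_predC P Rs; have : (0 < count P Rs)%N by rewrite /= /P /reflcls eqxx.
  by rewrite !size_filter /= in sizeRs *; lia.
have Rs20 : 0 \notin filter (predC P) Rs by rewrite mem_filter negb_and Rs0 orbT.
have [sols2 e2 size2'] := IH _ _ size2 Rs20 hS2.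
exists [seq s1 ++ s2 | s1 <- sols1, s2 <- sols2].
  by apply: half_enum_cat Prefl _ e2; apply: half_enum_permr e1; rewrite perm_sym.
by rewrite size_allpairs size1 size2' (Ncount_split (mem_head x Rs')) (sharp_perm class1).
Qed.

Lemma lmul_lstar0_gt0 f n : f n != 0 -> 0 < lmul (lstar f) f 0.
Proof.
move=> fn; have term i : lstar f i * f (0 - i) = f (- i) * (f (- i))^*.
  by rewrite lstarE sub0r mulrC.
rewrite lmulE lt_def sumr_ge0 ?andbT => [|i _]; last by rewrite term mul_conjC_ge0.
rewrite psumr_neq0 => [|i _]; last by rewrite term mul_conjC_ge0.
apply/hasP; exists (- n); last by rewrite term opprK mul_conjC_gt0.
by rewrite mem_finsupp lstarE opprK conjC_eq0.
Qed.

Lemma lnormsq0_gt0 p : p`_0 != 0 -> 0 < lnormsq p 0.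
Proof. by move=> p0; apply: (@lmul_lstar0_gt0 _ 0); rewrite lpolyE. Qed.

Lemma lnormsq_scale c p : lnormsq (c *: p) = lscale (c^* * c) (lnormsq p).
Proof.
by apply: leval_inj => z z0; rewrite leval_scale !leval_lnormsq // !hornerZ rmorphM mulrACA.
Qed.

Lemma lnormsq_proportional p q : p`_0 != 0 -> q`_0 != 0 ->
  perm_eq (rootseq p ++ map refl (rootseq p)) (rootseq q ++ map refl (rootseq q)) ->
  lnormsq p = lscale (lnormsq p 0 / lnormsq q 0) (lnormsq q).
Proof.
move=> p0 q0 pq; set k := lead_coef (prefl p * p) / lead_coef (prefl q * q).
have pq0 : prefl q * q != 0 by rewrite mulf_neq0 ?coef0_neq0_poly ?coef0_prefl.
have rootsPQ : perm_eq (rootseq (prefl p * p)) (rootseq (prefl q * q)).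
  by rewrite (permPl (rootseq_prefl_mul p0)) (permPr (rootseq_prefl_mul q0)).
have sizes : size (rootseq p) = size (rootseq q).
  by move/perm_size: pq; rewrite !size_cat !size_map !addnn => /double_inj.
have Tpq : lnormsq p = lscale k (lnormsq q).
  apply: leval_inj => z z0; rewrite leval_scale; apply: (mulfI (expf_neq0 (size (rootseq p)) z0)).
  rewrite -horner_prefl_mul // (perm_rootseq_scale pq0 rootsPQ) hornerZ horner_prefl_mul //.
  by rewrite sizes mulrCA.
have Tq0 := lt0r_neq0 (lnormsq0_gt0 q0).
by rewrite {2}Tpq lscaleE mulfK.
Qed.

(* The scalar [c] with [c^* c k = 1] and [c q(0) > 0]. *)
Definition normalizer q (k : C) := (q`_0)^* / sqrtC (k * (q`_0 * (q`_0)^*)).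

Lemma lnormsq_normalize q (k : C) G : q`_0 != 0 -> 0 < k -> lnormsq q = lscale k G ->
  lnormsq (normalizer q k *: q) = G /\ 0 < (normalizer q k *: q)`_0.
Proof.
move=> q0 k_gt0 qG; set c := normalizer q k; set w := q`_0 * (q`_0)^*; set s := sqrtC (k * w).
have w_gt0 : 0 < w by rewrite mul_conjC_gt0.
have s_gt0 : 0 < s by rewrite sqrtC_gt0 mulr_gt0.
have ss : s * s = k * w by rewrite -expr2 sqrtCK.
have cc : c^* * c * k = 1.
  rewrite /c rmorphM fmorphV /= conjCK geC0_conj ?ltW //.
  have -> : q`_0 / s * ((q`_0)^* / s) * k = w * k / (s * s) by rewrite /w; field; rewrite gt_eqF.
  by rewrite ss [k * w]mulrC divff // mulf_neq0 ?gt_eqF.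
split; last by rewrite coefZ mulrAC [_ * q`_0]mulrC -/w divr_gt0.
by apply/fsfunP => n; rewrite lnormsq_scale qG !lscaleE mulrA cc mul1r.
Qed.

(* The roots fix [p] up to a scalar, [lnormsq] makes it unimodular and [p_0 > 0] makes it [1]. *)
Lemma lnormsq_inj p q : lnormsq p = lnormsq q -> 0 < p`_0 -> 0 < q`_0 ->
  perm_eq (rootseq p) (rootseq q) -> p = q.
Proof.
move=> Tpq p_gt0 q_gt0 pq; have q00 := lt0r_neq0 q_gt0; have q0 := coef0_neq0_poly q00.
have pE := perm_rootseq_scale q0 pq; set mu := _ / _ in pE.
have mu_gt0 : 0 < mu by have := p_gt0; rewrite pE coefZ pmulr_lgt0.
have mu_norm : mu^* * mu = 1.
  apply: (mulIf (lt0r_neq0 (lnormsq0_gt0 q00))); rewrite mul1r.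
  by rewrite -lscaleE -lnormsq_scale -pE Tpq.
suff mu1 : mu = 1 by rewrite pE mu1 scale1r.
by apply/eqP; rewrite -sqrp_eq1 ?ltW // expr2 -{1}(geC0_conj (ltW mu_gt0)) mu_norm.
Qed.

Lemma inS_lstar_lpoly p b : inS (lstar (lpoly p), b) <->
  lnormsq p = lsub (lone R) (lmul b (lstar b)) /\ 0 < p`_0.
Proof.
rewrite /inS lstarK lpolyE /= /lnormsq; split=> [[ab1 _ p_gt0]|[Tb p_gt0]].
  by split=> //; apply/fsfunP => n; rewrite lsubE -ab1 laddE addrK.
split=> // [|n n_lt0]; last by rewrite lpolyE leNgt n_lt0.
by apply/fsfunP => n; rewrite laddE Tb lsubE subrK.
Qed.

Definition lcoefs f : {poly C} := \poly_(k < (lbound f).+1) f k%:Z.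

Lemma lpoly_lcoefs f : (forall n : int, n < 0 -> f n = 0) -> lpoly (lcoefs f) = f.
Proof.
move=> f_neg; apply/fsfunP => -[k|k]; rewrite lpolyE /=; last by rewrite f_neg.
rewrite coef_poly ltnS; case: leqP => // fk.
by rewrite fsfun_dflt //; apply: contraTN fk => /lbound_finsupp; rewrite -leqNgt.
Qed.

Lemma inS_lstar_lcoefs a b : inS (a, b) -> a = lstar (lpoly (lcoefs (lstar a))).
Proof. by case=> _ a_neg _; rewrite lpoly_lcoefs // lstarK. Qed.

Section Solutions.
Variables (b : laurent) (p0 : {poly C}).
Hypothesis p0_sol : inS (lstar (lpoly p0), b).
Local Notation F := (lsub (lone R) (lmul b (lstar b))).
Local Notation Rz := (lzeros F).

Lemma inS_polyP a : inS (a, b) <->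
  exists2 p, a = lstar (lpoly p) & lnormsq p = F /\ 0 < p`_0.
Proof.
split=> [a_sol|[p -> /inS_lstar_lpoly //]].
have aE := inS_lstar_lcoefs a_sol.
by exists (lcoefs (lstar a)) => //; apply/inS_lstar_lpoly; rewrite -aE.
Qed.

Lemma lzeros_sol p : lnormsq p = F -> 0 < p`_0 ->
  perm_eq Rz (rootseq p ++ map refl (rootseq p)).
Proof. by move=> <- /lt0r_neq0; apply: lzeros_lnormsq. Qed.

Lemma half_of_sol p : lnormsq p = F -> 0 < p`_0 -> half_of Rz (rootseq p).
Proof. by move=> Tp p_gt0; rewrite /half_of perm_sym lzeros_sol. Qed.

Let Tp0 : lnormsq p0 = F. Proof. by case/inS_lstar_lpoly: p0_sol. Qed.
Let p0_gt0 : 0 < p0`_0. Proof. by case/inS_lstar_lpoly: p0_sol. Qed.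

Definition sol_poly (s : seq C) : {poly C} :=
  let q := \prod_(x <- s) ('X - x%:P) in normalizer q (lnormsq q 0 / lnormsq p0 0) *: q.

Lemma sol_polyP s : half_of Rz s ->
  [/\ lnormsq (sol_poly s) = F, 0 < (sol_poly s)`_0 & perm_eq (rootseq (sol_poly s)) s].
Proof.
move=> hs; set q := \prod_(x <- s) ('X - x%:P).
have q_roots : perm_eq (rootseq q) s by rewrite -[q]scale1r rootseq_scale_prod ?oner_neq0.
have q0 : q`_0 != 0.
  rewrite -horner_coef0 horner_prod prodf_seq_neq0; apply/allP => x xs /=.
  rewrite hornerXsubC sub0r oppr_eq0; apply: contraNneq (lzeros_neq0 F) => <-.
  exact: mem_half_of hs xs.
have Tq : lnormsq q = lscale (lnormsq q 0 / lnormsq p0 0) (lnormsq p0).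
  apply: lnormsq_proportional (lt0r_neq0 p0_gt0) _ => //.
  apply: perm_trans (perm_cat q_roots (perm_map refl q_roots)) _.
  exact: perm_trans hs (lzeros_sol Tp0 p0_gt0).
have k_gt0 : 0 < lnormsq q 0 / lnormsq p0 0.
  exact: divr_gt0 (lnormsq0_gt0 q0) (lnormsq0_gt0 (lt0r_neq0 p0_gt0)).
have [-> sol_gt0] := lnormsq_normalize q0 k_gt0 Tq; rewrite Tp0; split=> //.
have c0 : normalizer q (lnormsq q 0 / lnormsq p0 0) != 0.
  by apply: contraTneq sol_gt0 => ->; rewrite scale0r coef0 ltxx.
exact: perm_trans (rootseqZ _ c0) q_roots.
Qed.

Lemma sol_uniq p q : lnormsq p = F -> 0 < p`_0 -> lnormsq q = F -> 0 < q`_0 ->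
  perm_eq (rootseq p) (rootseq q) -> p = q.
Proof. by move=> Tp p_gt0 Tq; apply: lnormsq_inj => //; rewrite Tp Tq. Qed.

Lemma solutions_enum : exists s : seq (laurent * laurent),
  [/\ uniq s, forall x, x \in s <-> inS x /\ x.2 = b & size s = Ncount Rz].
Proof.
have [sols [sols_uniq sols_canon sols_half sols_all] size_sols] :=
  exists_half_enum (lzeros_neq0 F) (half_of_sol Tp0 p0_gt0).
exists [seq (lstar (lpoly (sol_poly t)), b) | t <- sols]; split.
- rewrite map_inj_in_uniq // => t u ts us [/(can_inj lstarK)/lpoly_inj tu].
  have [Tt t_gt0 t_roots] := sol_polyP (sols_half t ts).
  have [Tu u_gt0 u_roots] := sol_polyP (sols_half u us).
  apply: sols_canon => //; rewrite perm_sym tu in t_roots.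
  exact: perm_trans t_roots u_roots.
- move=> [a b']; split=> [/mapP[t ts [-> ->]]|[a_sol /= eb]].
    by have [Tt t_gt0 _] := sol_polyP (sols_half t ts); split=> //; apply/inS_lstar_lpoly.
  subst b'; have [p -> [Tp p_gt0]] := (inS_polyP a).1 a_sol.
  have [t ts pt] := sols_all _ (half_of_sol Tp p_gt0).
  have [Tt t_gt0 t_roots] := sol_polyP (sols_half t ts).
  apply/mapP; exists t => //; congr (lstar (lpoly _), _).
  by apply: sol_uniq => //; rewrite (perm_trans pt) // perm_sym.
by rewrite size_map size_sols.
Qed.

Lemma solutions_neq a a' : inS (a, b) -> inS (a', b) ->
  a != a' <-> ~~ perm_eq (lzeros (lstar a)) (lzeros (lstar a')).
Proof.
move=> /inS_polyP[p -> [Tp p_gt0]] /inS_polyP[q -> [Tq q_gt0]]; rewrite !lstarK.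
have zp := lzeros_lpoly (lt0r_neq0 p_gt0); have zq := lzeros_lpoly (lt0r_neq0 q_gt0).
rewrite (permPl zp) (permPr zq); split; last by apply: contra => /eqP/(can_inj lstarK)/lpoly_inj ->.
apply: contra => pq.
by apply/eqP; congr (lstar (lpoly _)); apply: sol_uniq.
Qed.

Lemma solutions_circle_zeros a a' : inS (a, b) -> inS (a', b) ->
  perm_eq [seq x <- lzeros a | `|x| == 1] [seq x <- lzeros a' | `|x| == 1].
Proof.
have circle_count p z : lnormsq p = F -> 0 < p`_0 -> `|z| = 1 ->
    count_mem z (lzeros (lstar (lpoly p))) = (count_mem z Rz)./2.
  move=> Tp p_gt0 z1; rewrite (permP (lzeros_lstar_lpoly (lt0r_neq0 p_gt0))).
  by rewrite count_map_reflT reflT_norm1 // (half_of_count_norm1 (half_of_sol Tp p_gt0)) // doubleK.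
move=> /inS_polyP[p -> [Tp p_gt0]] /inS_polyP[q -> [Tq q_gt0]].
apply/allP => z _.
have filt (s : seq C) :
    count_mem z [seq x <- s | `|x| == 1] = if `|z| == 1 then count_mem z s else 0%N.
  rewrite count_filter; case: ifP => z1.
    by apply: eq_count => y /=; apply/andb_idr => /eqP ->.
  rewrite -(count_pred0 s); apply: eq_count => y /=.
  by apply/andP => -[/eqP ->]; rewrite z1.
by rewrite /= !filt; case: ifP => // /eqP z1; rewrite !circle_count.
Qed.

Lemma inS_lstar_lpoly_symm_union (a : {poly C}) : inS (lstar (lpoly a), b) ->
  perm_eq Rz (symm_union (rootseq a)).
Proof.
move=> /inS_lstar_lpoly[Ta a_gt0].
by rewrite (permPl (lzeros_sol Ta a_gt0)) perm_sym symm_union_perm.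
Qed.

Lemma symm_union_inS_unique (a : {poly C}) : a`_0 != 0 -> perm_eq Rz (symm_union (rootseq a)) ->
  exists! lam : C, lam != 0 /\ inS (lscale lam (lstar (lpoly a)), b).
Proof.
move=> a0 Rz_a; have p00 := lt0r_neq0 p0_gt0.
have Ta : lnormsq a = lscale (lnormsq a 0 / lnormsq p0 0) (lnormsq p0).
  apply: lnormsq_proportional => //; rewrite -(permPl (symm_union_perm _)) perm_sym.
  by apply: perm_trans Rz_a; rewrite perm_sym lzeros_sol.
have k_gt0 : 0 < lnormsq a 0 / lnormsq p0 0 by rewrite divr_gt0 ?lnormsq0_gt0.
have [Tca ca_gt0] := lnormsq_normalize a0 k_gt0 Ta; set c := normalizer a _ in Tca ca_gt0.
have c0 : c != 0 by apply: contraTneq ca_gt0 => ->; rewrite scale0r coef0 ltxx.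
exists c^*; split=> [|mu [mu0]].
  by rewrite conjC_eq0 lscale_lstar_lpoly conjCK; split=> //; apply/inS_lstar_lpoly; rewrite Tca.
rewrite lscale_lstar_lpoly => /inS_lstar_lpoly[Tmu mu_gt0].
have ca_mua : c *: a = mu^* *: a.
  apply: sol_uniq => //; first by rewrite Tca.
  by rewrite (permPl (rootseqZ _ c0)) perm_sym; apply: rootseqZ; rewrite conjC_eq0.
have := congr1 (fun p => p`_0) ca_mua; rewrite !coefZ => /(mulIf a0) ->.
by rewrite conjCK.
Qed.

End Solutions.

End LaurentPolynomials.

Theorem lemmaA2 (R : realType) (b : laurent R) :
  inB b ->
  let Rz := lzeros (lsub (lone R) (lmul b (lstar b))) in
  [/\ (* (a) *)
      exists s : seq (laurent R * laurent R),
        [/\ uniq s, (forall p, p \in s <-> inS p /\ p.2 = b) & size s = Ncount Rz],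
      (* (b) *)
      (forall a a' : laurent R, inS (a, b) -> inS (a', b) ->
         (a != a' <-> ~~ perm_eq (lzeros (lstar a)) (lzeros (lstar a'))) /\
         perm_eq [seq x <- lzeros a | `|x| == 1] [seq x <- lzeros a' | `|x| == 1])
    & (* (c) *)
      (forall a : {poly R[i]}, a`_0 != 0 ->
         (inS (lstar (lpoly a), b) -> perm_eq Rz (symm_union (rootseq a))) /\
         (perm_eq Rz (symm_union (rootseq a)) ->
            exists! lam : R[i], lam != 0 /\ inS (lscale lam (lstar (lpoly a)), b)))].
Proof.
move=> [a0 a0_sol] Rz; have p0_sol := a0_sol; rewrite (inS_lstar_lcoefs a0_sol) in p0_sol.
split.
- exact: solutions_enum p0_sol.
- move=> a a' a_sol a'_sol.
  by split; [exact: solutions_neq a_sol a'_sol | exact: solutions_circle_zeros a_sol a'_sol].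
move=> a a_0; split; first exact: inS_lstar_lpoly_symm_union.
exact: symm_union_inS_unique p0_sol a a_0.
Qed.
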